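(* Let $\lambda_1,\dots,\lambda_p>0$ be pairwise distinct, $\Sigma=\mathrm{diag}(\lambda_1,\dots,\lambda_p)$, $E$ a real symmetric $p\times p$ matrix, $\widehat\Sigma=\Sigma+E$, $x$ an eigenvalue of $\widehat\Sigma$, $k\in\arg\min_m|\lambda_m-x|$, and $q>0$. Suppose $$\|E(\nu(k))\|\le\frac12\qquad\text{and}\qquad \|E(\nu(k))\|\le \frac{q\sqrt{\delta_k}\,\nu_k(k)}{2\sqrt2}.$$ Then every eigenvector $\vec\eta$ of $\widehat\Sigma$ for $x$ satisfies $\langle\vec\eta,\vec\mu_k\rangle\neq0$, and the angle $\theta\in[0,\pi/2]$ between $\vec\eta$ and $\vec\mu_k$ (defined by $\cos\theta=|\langle\vec\eta,\vec\mu_k\rangle|/\|\vec\eta\|$) satisfies $\tan\theta\le q$, in particular $\sin\theta\le q$.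
   Context: $\vec\mu_1,\dots,\vec\mu_p$ are the standard basis vectors; $\|\cdot\|$ is the operator norm; $\delta_k=\min_{j\ne k}|\lambda_k-\lambda_j|$. For a vector $\nu\in[0,\infty)^p$, $E(\nu)=\mathrm{diag}(\nu)E\,\mathrm{diag}(\nu)$. The vector $\nu(k)$ is defined by $\nu_j(k)=\sqrt2\,|\lambda_j-\lambda_k|^{-1/2}$ for $j\ne k$ and $\nu_k(k)=\max_{j\ne k}\sqrt{\lambda_j/(|\lambda_j-\lambda_k|\,\lambda_k)}$. *)

From HB Require Import structures.
From mathcomp Require Import all_boot all_order all_algebra.
Set Implicit Arguments. Unset Strict Implicit. Unset Printing Implicit Defensive.
Import Order.TTheory GRing.Theory Num.Theory.
Local Open Scope ring_scope.

Section Defs.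
Variable R : rcfType.
Variable p : nat.

Definition dotv (u v : 'cV[R]_p) : R := \sum_(i < p) u i 0 * v i 0.
Definition vnorm (u : 'cV[R]_p) : R := Num.sqrt (dotv u u).

Definition mu (k : 'I_p) : 'cV[R]_p := delta_mx k 0.

(* ||A|| <= c for the operator norm (sup_{v<>0} |Av|/|v|), unfolded *)
Definition opnorm_le (A : 'M[R]_p) (c : R) : Prop :=
  forall v : 'cV[R]_p, vnorm (A *m v) <= c * vnorm v.

Definition diagm (lam : 'I_p -> R) : 'M[R]_p := diag_mx (\row_i lam i).

Definition Enu (E : 'M[R]_p) (nu : 'I_p -> R) : 'M[R]_p :=
  diagm nu *m E *m diagm nu.

(* delta_k = min_{j <> k} |lambda_k - lambda_j|  (seed = max over all j,
   which does not change the value when p >= 2) *)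
Definition gap (lam : 'I_p -> R) (k : 'I_p) : R :=
  \big[Num.min/ \big[Num.max/0]_(j < p) `|lam k - lam j|]_(j < p | j != k)
     `|lam k - lam j|.

Definition nuvec (lam : 'I_p -> R) (k : 'I_p) (j : 'I_p) : R :=
  if j != k then Num.sqrt 2 * (Num.sqrt `|lam j - lam k|)^-1
  else \big[Num.max/0]_(i < p | i != k)
          Num.sqrt (lam i / (`|lam i - lam k| * lam k)).

Definition eigenvalue_of (A : 'M[R]_p) (x : R) : Prop :=
  exists v : 'cV[R]_p, v != 0 /\ A *m v = x *: v.

Definition eigenvector_of (A : 'M[R]_p) (x : R) (v : 'cV[R]_p) : Prop :=
  v != 0 /\ A *m v = x *: v.

Definition cos_angle (eta u : 'cV[R]_p) : R := `|dotv eta u| / vnorm eta.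
Definition sin_angle (eta u : 'cV[R]_p) : R :=
  Num.sqrt (1 - cos_angle eta u ^+ 2).
Definition tan_angle (eta u : 'cV[R]_p) : R :=
  sin_angle eta u / cos_angle eta u.
End Defs.

From HB Require Import structures.
From mathcomp Require Import all_boot all_order all_algebra.
From mathcomp Require Import ring lra.
Import Order.TTheory GRing.Theory Num.Theory.
Local Open Scope ring_scope.

(* Rescale the eigenvector: w := diag(nu)^-1 eta satisfies
   E(nu) w = diag(nu) (x - Sigma) eta.  As lambda_k is the eigenvalue nearest
   to x, |lambda_j - lambda_k| <= 2 |x - lambda_j|, so for j <> k the entry
   nu_j (x - lambda_j) eta_j dominates both w_j and sqrt(delta_k / 2) eta_j.
   The bound ||E(nu)|| <= 1/2 then gives sum_(j <> k) w_j^2 <= w_k^2 / 3, and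
   the second bound turns this into sum_(j <> k) eta_j^2 <= q^2 eta_k^2 / 3,
   i.e. tan^2 theta <= q^2 / 3; in particular eta_k <> 0. *)

Section Angles.
Context {R : rcfType} {p : nat}.
Implicit Types (u eta : 'cV[R]_p) (k : 'I_p).

Lemma dotvv_bigD1 u k :
  dotv u u = u k 0 ^+ 2 + \sum_(i | i != k) u i 0 ^+ 2.
Proof. by rewrite /dotv (bigD1 k) //=; under eq_bigr do rewrite -expr2. Qed.

Lemma dotv_col_bigD1 (f : 'I_p -> R) k :
  dotv (\col_i f i) (\col_i f i) = f k ^+ 2 + \sum_(i | i != k) f i ^+ 2.
Proof. by rewrite (dotvv_bigD1 _ k) mxE; under eq_bigr do rewrite mxE. Qed.

Lemma dotv_ge0 u : 0 <= dotv u u.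
Proof. by apply: sumr_ge0 => i _; rewrite -expr2 sqr_ge0. Qed.

Lemma dotv_mu u k : dotv u (mu R k) = u k 0.
Proof.
rewrite /dotv (bigD1 k) //= big1 ?addr0; first by rewrite /mu mxE !eqxx mulr1.
by move=> i ik; rewrite /mu mxE (negbTE ik) mulr0.
Qed.

Lemma opnorm_le_sqr {A : 'M[R]_p} {c} v :
  opnorm_le A c -> dotv (A *m v) (A *m v) <= c ^+ 2 * dotv v v.
Proof.
move=> /(_ v) Av; rewrite -(sqr_sqrtr (dotv_ge0 (A *m v))) -(sqr_sqrtr (dotv_ge0 v)).
by rewrite -exprMn !expr2; apply: ler_pM => //; exact: sqrtr_ge0.
Qed.

Context {eta : 'cV[R]_p} {k : 'I_p}.
Let S := \sum_(i | i != k) eta i 0 ^+ 2.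

Lemma coord_neq0_of_offdiag_le {C} : eta != 0 ->
  S <= C * eta k 0 ^+ 2 -> eta k 0 != 0.
Proof.
move=> eta_neq0 HS; apply: contraNneq eta_neq0 => etak0; apply/eqP/matrixP => i j.
rewrite (ord1 j) mxE; have [->//|ik] := eqVneq i k.
move: HS; rewrite etak0 expr0n mulr0 => HS.
have sum0 : S = 0.
  by apply/le_anti; rewrite HS sumr_ge0 // => l _; rewrite sqr_ge0.
by apply/eqP; rewrite -sqrf_eq0 (psumr_eq0P _ sum0) // => l _; rewrite sqr_ge0.
Qed.

Hypothesis eta_k_neq0 : eta k 0 != 0.

Let ek2_gt0 : 0 < eta k 0 ^+ 2.
Proof. by rewrite exprn_even_gt0. Qed.

Let S_ge0 : 0 <= S.
Proof. by apply: sumr_ge0 => i _; rewrite sqr_ge0. Qed.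

Let dotvv_gt0 : 0 < eta k 0 ^+ 2 + S.
Proof. exact: ltr_wpDr. Qed.

Let cos_angle_mu_sqr : cos_angle eta (mu R k) ^+ 2 = eta k 0 ^+ 2 / (eta k 0 ^+ 2 + S).
Proof.
rewrite /cos_angle dotv_mu /vnorm (dotvv_bigD1 _ k) expr_div_n real_normK ?num_real //.
by rewrite sqr_sqrtr ?addr_ge0 ?sqr_ge0.
Qed.

Lemma sin_angle_mu_sqr : sin_angle eta (mu R k) ^+ 2 = S / (eta k 0 ^+ 2 + S).
Proof.
have -> : S / (eta k 0 ^+ 2 + S) = 1 - cos_angle eta (mu R k) ^+ 2.
  by rewrite cos_angle_mu_sqr; field; rewrite gt_eqF.
by rewrite sqr_sqrtr // subr_ge0 cos_angle_mu_sqr ler_pdivrMr ?mul1r ?lerDl.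
Qed.

Lemma tan_angle_mu_sqr : tan_angle eta (mu R k) ^+ 2 = S / eta k 0 ^+ 2.
Proof.
rewrite /tan_angle expr_div_n sin_angle_mu_sqr cos_angle_mu_sqr.
by field; rewrite eta_k_neq0 gt_eqF.
Qed.

Lemma angle_mu_le {q} : 0 <= q -> S <= q ^+ 2 * eta k 0 ^+ 2 ->
  tan_angle eta (mu R k) <= q /\ sin_angle eta (mu R k) <= q.
Proof.
move=> q_ge0 HS.
have cos_gt0 : 0 < cos_angle eta (mu R k).
  rewrite /cos_angle dotv_mu divr_gt0 ?normr_gt0 //.
  by rewrite sqrtr_gt0 (dotvv_bigD1 _ k).
have sin_ge0 : 0 <= sin_angle eta (mu R k) by apply: sqrtr_ge0.
have tan_ge0 : 0 <= tan_angle eta (mu R k) by exact: divr_ge0 sin_ge0 (ltW cos_gt0).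
split; rewrite -ler_sqr ?nnegrE //.
  by rewrite tan_angle_mu_sqr ler_pdivrMr.
rewrite sin_angle_mu_sqr ler_pdivrMr // mulrDr.
have : 0 <= q ^+ 2 * S by rewrite mulr_ge0 ?sqr_ge0.
lra.
Qed.

End Angles.

Lemma Enu_mul_scaled_eigenvector {R : rcfType} {p : nat} {lam nu : 'I_p -> R}
    {E : 'M[R]_p} {x : R} {eta : 'cV[R]_p} :
  (forall i, nu i != 0) -> (diagm lam + E) *m eta = x *: eta ->
  Enu E nu *m \col_i (eta i 0 / nu i) = \col_i (nu i * ((x - lam i) * eta i 0)).
Proof.
move=> nu_neq0 eigen.
have -> : \col_i (eta i 0 / nu i) = diag_mx (\row_i (nu i)^-1) *m eta.
  by apply/matrixP => i j; rewrite (ord1 j) mul_diag_mx !mxE mulrC.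
have scaleK : diagm nu *m diag_mx (\row_i (nu i)^-1) = 1%:M.
  apply/matrixP => i j; rewrite mul_diag_mx !mxE.
  by case: eqVneq => [->|]; rewrite ?mulfV ?mulr0.
have Eeta : E *m eta = x *: eta - diagm lam *m eta.
  by rewrite -eigen mulmxDl addrAC subrr add0r.
rewrite /Enu -!mulmxA [diagm nu *m (_ *m eta)]mulmxA scaleK mul1mx Eeta.
by apply/matrixP => i j; rewrite (ord1 j) /diagm !mul_diag_mx !mxE mulrBl mulrBr.
Qed.

Section Perturbation.
Context {R : rcfType} {p : nat} {lam : 'I_p -> R} {k : 'I_p}.
Hypothesis lam_inj : forall i j, i != j -> lam i != lam j.
Hypothesis p_gt1 : (1 < p)%N.
Hypothesis lam_gt0 : forall i, 0 < lam i.

Let n := nuvec lam k.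

Lemma exists_neq (j : 'I_p) : exists i : 'I_p, i != j.
Proof.
have : (0 < #|predC1 j|)%N by rewrite cardC1 card_ord -ltnS prednK // ltnW.
by case/card_gt0P => i; exists i.
Qed.

Lemma dist_lam_gt0 {j} : j != k -> 0 < `|lam j - lam k|.
Proof. by move=> jk; rewrite normr_gt0 subr_eq0 lam_inj. Qed.

Lemma nuvec_sqr_mul_dist {j} : j != k -> n j ^+ 2 * `|lam j - lam k| = 2.
Proof.
move=> jk; rewrite /n /nuvec jk exprMn exprVn !sqr_sqrtr ?normr_ge0 //.
by rewrite -mulrA mulVf ?mulr1 // gt_eqF ?dist_lam_gt0.
Qed.

Lemma nuvec_k_gt0 : 0 < n k.
Proof.
have [j jk] := exists_neq k.
rewrite /n /nuvec eqxx (bigD1 j) //= lt_max sqrtr_gt0.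
by rewrite divr_gt0 ?mulr_gt0 ?dist_lam_gt0.
Qed.

Lemma gap_le_dist {j} : j != k -> gap lam k <= `|lam j - lam k|.
Proof. by move=> jk; rewrite /gap (bigD1 j) //= ge_min distrC lexx. Qed.

Lemma gap_gt0 : 0 < gap lam k.
Proof.
have [j0 j0k] := exists_neq k.
apply: (big_ind (fun y => 0 < y)) => [|a b a_gt0 b_gt0|j jk].
- by rewrite (bigD1 j0) //= lt_max distrC dist_lam_gt0.
- by rewrite lt_min a_gt0.
- by rewrite distrC dist_lam_gt0.
Qed.

Context {x : R}.
Hypothesis k_nearest : forall m, `|lam k - x| <= `|lam m - x|.

Lemma dist_lam_le j : `|lam j - lam k| <= 2 * `|x - lam j|.
Proof.
apply: le_trans (ler_distD x _ _) _.
by rewrite distrC (distrC x) mulr2n mulrDl mul1r lerD2l distrC k_nearest.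
Qed.

Lemma nuvec_sqr_mul_dist_ge1 {j} : j != k -> 1 <= n j ^+ 2 * `|x - lam j|.
Proof.
move=> jk; rewrite -(ler_pM2r (dist_lam_gt0 jk)) mul1r mulrAC nuvec_sqr_mul_dist //.
exact: dist_lam_le.
Qed.

Lemma half_gap_le {j} : j != k -> gap lam k / 2 <= n j ^+ 2 * (x - lam j) ^+ 2.
Proof.
move=> jk; rewrite ler_pdivrMr // -(ler_pM2r (dist_lam_gt0 jk)).
rewrite (_ : _ * 2 * _ = 2 * (x - lam j) ^+ 2 * (n j ^+ 2 * `|lam j - lam k|));
  last by ring.
rewrite nuvec_sqr_mul_dist // -real_normK ?num_real //.
have d_ge0 := ltW (dist_lam_gt0 jk).
have := ler_pM (ltW gap_gt0) d_ge0 (gap_le_dist jk) (lexx `|lam j - lam k|).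
have := ler_pM d_ge0 d_ge0 (dist_lam_le j) (dist_lam_le j).
nra.
Qed.

Context {E : 'M[R]_p} {q : R} {eta : 'cV[R]_p}.
Hypothesis eigen : (diagm lam + E) *m eta = x *: eta.
Hypothesis Enu_le_half : opnorm_le (Enu E n) (1 / 2).
Hypothesis Enu_le_q :
  opnorm_le (Enu E n) (q * Num.sqrt (gap lam k) * n k / (2 * Num.sqrt 2)).

Lemma offdiag_mass_le :
  \sum_(i | i != k) eta i 0 ^+ 2 <= q ^+ 2 / 3 * eta k 0 ^+ 2.
Proof.
have n_neq0 i : n i != 0.
  have [->|ik] := eqVneq i k; first by rewrite gt_eqF ?nuvec_k_gt0.
  have /eqP := nuvec_sqr_mul_dist ik; apply: contraTneq => ->.
  by rewrite expr0n mul0r eq_sym pnatr_eq0.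
pose W i := eta i 0 / n i.
have := opnorm_le_sqr (\col_i W i) Enu_le_half.
have := opnorm_le_sqr (\col_i W i) Enu_le_q.
rewrite (Enu_mul_scaled_eigenvector n_neq0 eigen) !(dotv_col_bigD1 _ k).
set c := (q * _ * _ / _); set ak := (n k * _) ^+ 2.
set Ar := \sum_(i | _) (n i * _) ^+ 2.
set Wr := \sum_(i | _) W i ^+ 2; set Sr := \sum_(i | _) eta i 0 ^+ 2.
move=> Ar_le_c Ar_le_half.
have Wr_le_Ar : Wr <= Ar.
  apply: ler_sum => i ik.
  have -> : n i * ((x - lam i) * eta i 0) = n i ^+ 2 * (x - lam i) * W i.
    by rewrite /W; field.
  rewrite [leRHS]exprMn; apply: ler_peMl; first exact: sqr_ge0.
  rewrite -real_normK ?num_real //; apply: exprn_ege1.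
  by rewrite normrM ger0_norm ?sqr_ge0 ?nuvec_sqr_mul_dist_ge1.
have Sr_le_Ar : gap lam k / 2 * Sr <= Ar.
  rewrite mulr_sumr; apply: ler_sum => i ik.
  rewrite !exprMn mulrA ler_wpM2r ?sqr_ge0 //.
  exact: half_gap_le.
have ak_ge0 : 0 <= ak by apply: sqr_ge0.
have Wr_le_Wk : Wr <= W k ^+ 2 / 3 by rewrite ler_pdivlMr //; lra.
have c2Wk : c ^+ 2 * W k ^+ 2 = q ^+ 2 * gap lam k * eta k 0 ^+ 2 / 8.
  rewrite /c /W expr_div_n !exprMn !sqr_sqrtr ?ltW ?gap_gt0 //.
  by field; rewrite n_neq0.
have : Ar <= c ^+ 2 * (W k ^+ 2 * 4 / 3).
  apply: le_trans (_ : c ^+ 2 * (W k ^+ 2 + Wr) <= _); first by lra.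
  by apply: ler_wpM2l; [apply: sqr_ge0 | lra].
rewrite mulrA mulrA c2Wk => Ar_le.
have : gap lam k * Sr <= gap lam k * (q ^+ 2 / 3 * eta k 0 ^+ 2) by lra.
by rewrite ler_pM2l ?gap_gt0.
Qed.

End Perturbation.

Theorem mainTheorem6 (R : rcfType) (p : nat) (hp : (1 < p)%N)
    (lam : 'I_p -> R) (E : 'M[R]_p) (x q : R) (k : 'I_p)
    (hpos : forall i, 0 < lam i)
    (hdist : forall i j, i != j -> lam i != lam j)
    (hsym : E^T = E)
    (hx : eigenvalue_of (diagm lam + E) x)
    (hk : forall m : 'I_p, `|lam k - x| <= `|lam m - x|)
    (hq : 0 < q)
    (h1 : opnorm_le (Enu E (nuvec lam k)) (1 / 2))
    (h2 : opnorm_le (Enu E (nuvec lam k))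
            (q * Num.sqrt (gap lam k) * nuvec lam k k / (2 * Num.sqrt 2))) :
  forall eta : 'cV[R]_p, eigenvector_of (diagm lam + E) x eta ->
    dotv eta (@mu R p k) != 0 /\
    tan_angle eta (@mu R p k) <= q /\ sin_angle eta (@mu R p k) <= q.
Proof.
move=> eta [eta_neq0 eigen].
have mass := offdiag_mass_le hdist hp hpos hk eigen h1 h2.
have eta_k_neq0 := coord_neq0_of_offdiag_le eta_neq0 mass.
rewrite dotv_mu; split=> //; apply: (angle_mu_le eta_k_neq0 (ltW hq)).
apply: le_trans mass _; rewrite ler_wpM2r ?sqr_ge0 // ler_pdivrMr //.
by have := sqr_ge0 q; lra.
Qed.
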